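(* For every $n\ge 2$, the set of degrees of vertices of ${\rm OFG}(M_{2,n})$ (equivalently, the set of values of the number of flippable faces over all locally valid MV assignments of $M_{2,n}$) is exactly $\{2,3,4,\dots,2n-2,2n\}$.
   Context: The $2\times n$ Miura-ori $M_{2,n}$ ($n\ge1$) has faces $\alpha_{i,j}$ ($i\in\{1,2\}$, $j\in\{1,\dots,n\}$), interior vertices $x_1,\dots,x_{n-1}$, and creases $e_0$ and $e_{3k-1},e_{3k},e_{3k+1}$ ($k=1,\dots,n-1$). At $x_k$ the creases are left $e_{3k-3}$, top $e_{3k-1}$, right $e_{3k}$, bottom $e_{3k+1}$. Face $\alpha_{1,j}$ is bordered by those of $e_{3j-4}$ (iff $j\ge2$), $e_{3j-3}$, $e_{3j-1}$ (iff $j\le n-1$); $\alpha_{2,j}$ by those of $e_{3j-2}$ (iff $j\ge2$), $e_{3j-3}$, $e_{3j+1}$ (iff $j\le n-1$). An MV assignment $\mu$ maps creases to $\{1,-1\}$; it is locally valid if for each $k$ exactly one of $\mu(e_{3k-1}),\mu(e_{3k}),\mu(e_{3k+1})$ differs from $\mu(e_{3k-3})$. The face flip $\mu_\alpha$ negates $\mu$ on the creases bordering $\alpha$; $\alpha$ is flippable under $\mu$ if $\mu,\mu_\alpha$ are both locally valid. ${\rm OFG}(M_{2,n})$ has the locally valid assignments as vertices, with $\mu\sim\mu_\alpha$ for each flippable $\alpha$. *)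

From mathcomp Require Import all_boot.
Set Implicit Arguments. Unset Strict Implicit. Unset Printing Implicit Defensive.

(* Creases: e_0 and e_{3k-1}, e_{3k}, e_{3k+1} (1 <= k <= n-1), i.e. exactly
   the indices 0 .. 3n-2; we index creases by 'I_(3*n-1) (crease e_c <-> c).
   MV values: true encodes 1 (mountain), false encodes -1 (valley).
   Faces alpha_{i,j} (i in {1,2}, j in {1..n}) are indexed by
   ('I_2 * 'I_n) with (i0, j0) <-> alpha_{i0+1, j0+1}. *)

Definition MVassign (n : nat) := {ffun 'I_(3 * n - 1) -> bool}.
Definition face (n : nat) := ('I_2 * 'I_n)%type.

(* value of mu on crease e_c (c given as a natural number; out-of-range
   indices are never used for 0 <= c <= 3n-2) *)
Definition mv (n : nat) (mu : MVassign n) (c : nat) : bool :=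
  if insub c is Some i then mu i else false.

(* does crease e_c border face alpha_{i,j} (1-based i, j)? *)
Definition borders (n i j c : nat) : bool :=
  if i == 1 then
    [|| (2 <= j) && (c == 3 * j - 4), c == 3 * j - 3 | (j <= n - 1) && (c == 3 * j - 1)]
  else
    [|| (2 <= j) && (c == 3 * j - 2), c == 3 * j - 3 | (j <= n - 1) && (c == 3 * j + 1)].

Definition face_borders (n : nat) (a : face n) (c : nat) : bool :=
  borders n (a.1).+1 (a.2).+1 c.

(* local validity: for each interior vertex x_k, exactly one of the top,
   right, bottom creases has a value different from the left crease *)
Definition locally_valid (n : nat) (mu : MVassign n) : bool :=
  [forall k : 'I_n, (1 <= k) ==>
     (count (fun c => mv mu c != mv mu (3 * k - 3))
        [:: 3 * k - 1; 3 * k; 3 * k + 1] == 1)].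

Definition flip (n : nat) (mu : MVassign n) (a : face n) : MVassign n :=
  [ffun c => if face_borders a (val c) then ~~ mu c else mu c].

Definition flippable (n : nat) (mu : MVassign n) (a : face n) : bool :=
  locally_valid mu && locally_valid (flip mu a).

Definition ofg_adj (n : nat) (mu nu : MVassign n) : bool :=
  [exists a : face n, flippable mu a && (nu == flip mu a)].

Definition ofg_degree (n : nat) (mu : MVassign n) : nat :=
  #|[set nu : MVassign n | locally_valid nu && ofg_adj mu nu]|.

(* At an interior vertex x_k local validity singles out one of the top, right
   and bottom creases, the one whose MV value differs from the left crease: the
   odd crease of x_k.  A face flip toggles two creases at each of its vertices,
   which keeps x_k valid unless it creates a second disagreeing crease; hence
   alpha_(1,j+1) is flippable iff the odd crease of x_j is not the bottom one and
   that of x_(j+1) is not the top one, and symmetrically for alpha_(2,j+1), where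
   x_0 and x_n behave as if their odd crease were the right one.  Distinct faces
   give distinct flips, so the degree is a sum over the n columns of faces of a
   contribution that is 2 if both bounding vertices have a right odd crease, 1
   if exactly one does, and at most 1 otherwise.  Hence the degree is 2n if all
   odd creases are right ones and lies in [2, 2n-2] otherwise.  Conversely every
   choice of odd creases is realised, by integrating along the spine e_0, e_3,
   e_6, ...; making x_1..x_m right, the next r-1 vertices top and the remaining
   ones bottom (r = 1, 2) gives degree 2m + r + 1. *)

From mathcomp Require Import all_boot.
From mathcomp Require Import zify.
Set Implicit Arguments. Unset Strict Implicit. Unset Printing Implicit Defensive.

Section Flips.
Variable n : nat.
Implicit Types (mu : MVassign n) (a : face n).

Lemma mv_ffun (F : nat -> bool) c : c < 3 * n - 1 ->
  mv ([ffun i : 'I_(3 * n - 1) => F (val i)] : MVassign n) c = F c.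
Proof.
move=> hc; rewrite /mv; case: insubP => [i _ vi|]; first by rewrite ffunE vi.
by rewrite hc.
Qed.

Lemma mv_flip mu a c : c < 3 * n - 1 ->
  mv (flip mu a) c = face_borders a c (+) mv mu c.
Proof.
move=> hc; rewrite /mv; case: insubP => [i _ vi|]; last by rewrite hc.
by rewrite ffunE vi; case: (face_borders a c); case: (mu i).
Qed.

Lemma face_borders_spine a k : face_borders a (3 * k) = (k == a.2).
Proof.
case: a => [[[|[|i]] hi] j] //=; rewrite /face_borders /borders /=.
all: by apply/idP/idP; lia.
Qed.

Lemma face_borders_vertex a k : 0 < k < n ->
  [/\ face_borders a (3 * k - 3) = (k == a.2.+1),
      face_borders a (3 * k - 1) = (a.1 == 0 :> nat) && ((k == a.2) || (k == a.2.+1)) &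
      face_borders a (3 * k + 1) = (a.1 == 1 :> nat) && ((k == a.2) || (k == a.2.+1))].
Proof.
case: a => [[[|[|i]] hi] j] //= hk; rewrite /face_borders /borders /=.
all: by split; apply/idP/idP; lia.
Qed.

Lemma face_borders_inj a b : 1 < n ->
  (forall c, c < 3 * n - 1 -> face_borders a c = face_borders b c) -> a = b.
Proof.
case: a b => [i j] [i' j'] n_gt1 eq_borders.
have spine_lt : 3 * j < 3 * n - 1 by have := ltn_ord j; lia.
have ej : j = j'.
  by apply: val_inj; move/esym: (eq_borders _ spine_lt); rewrite !face_borders_spine eqxx => /eqP.
subst j'; congr pair; apply: val_inj.
pose top := if j < n.-1 then 3 * j + 2 else 3 * j - 1.
have top_lt : top < 3 * n - 1 by rewrite /top; have := ltn_ord j; case: ifP; lia.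
have top_face (i0 : 'I_2) : face_borders (i0, j) top = (i0 == 0 :> nat).
  rewrite /top /face_borders /borders; have := ltn_ord j.
  by case: i0 => [[|[|i0]] hi0] //=; case: ifP; lia.
have := eq_borders _ top_lt; rewrite !top_face.
by case: i i' {eq_borders} => [[|[|i]] hi] [[|[|i']] hi'].
Qed.

Definition valid_at mu k :=
  count (fun c => mv mu c != mv mu (3 * k - 3)) [:: 3 * k - 1; 3 * k; 3 * k + 1] == 1.

Definition odd_top mu k := (0 < k < n) && (mv mu (3 * k - 1) != mv mu (3 * k - 3)).
Definition odd_bottom mu k := (0 < k < n) && (mv mu (3 * k + 1) != mv mu (3 * k - 3)).

Lemma locally_validP mu :
  reflect (forall k, 0 < k < n -> valid_at mu k) (locally_valid mu).
Proof.
apply: (iffP forallP) => [V k /andP[k_gt0 k_lt_n] | V k].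
  by have := V (Ordinal k_lt_n); rewrite /= k_gt0.
by apply/implyP => k_gt0; apply: V; rewrite k_gt0 ltn_ord.
Qed.

Lemma valid_at_flip mu (i : 'I_2) (j : 'I_n) k : 0 < k < n -> valid_at mu k ->
  valid_at (flip mu (i, j)) k =
  ((k == j) ==> ~~ (if i == 0 :> nat then odd_bottom mu k else odd_top mu k)) &&
  ((k == j.+1) ==> ~~ (if i == 0 :> nat then odd_top mu k else odd_bottom mu k)).
Proof.
move=> hk; have [? ? ? ?] : [/\ 3 * k - 3 < 3 * n - 1, 3 * k - 1 < 3 * n - 1,
                            3 * k < 3 * n - 1 & 3 * k + 1 < 3 * n - 1] by split; lia.
rewrite /valid_at /odd_top /odd_bottom hk /= !mv_flip //.
have [-> -> ->] := face_borders_vertex (i, j) hk; rewrite face_borders_spine /=.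
move: (mv mu _) (mv mu _) (mv mu _) (mv mu _) => l t r b.
case: (k =P j) => [kj|_]; case: (k =P j.+1) => [kj1|_] //=; first lia.
all: by case: i => [[|[|i]] hi] //=; case: l; case: t; case: r; case: b.
Qed.

Lemma odd_top_out mu k : ~~ (0 < k < n) -> odd_top mu k = false.
Proof. by rewrite /odd_top => /negbTE ->. Qed.

Lemma odd_bottom_out mu k : ~~ (0 < k < n) -> odd_bottom mu k = false.
Proof. by rewrite /odd_bottom => /negbTE ->. Qed.

Lemma locally_valid_flip mu (i : 'I_2) (j : 'I_n) : locally_valid mu ->
  locally_valid (flip mu (i, j)) =
  if i == 0 :> nat then ~~ odd_bottom mu j && ~~ odd_top mu j.+1
  else ~~ odd_top mu j && ~~ odd_bottom mu j.+1.
Proof.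
move=> /locally_validP V; apply/locally_validP/idP => [W | C k hk].
- have left_ok : ~~ (if i == 0 :> nat then odd_bottom mu j else odd_top mu j).
    have [hj | hj] := boolP (0 < j < n).
      by have := W j hj; rewrite valid_at_flip ?V // eqxx => /andP[].
    by rewrite odd_top_out ?odd_bottom_out ?if_same.
  have right_ok : ~~ (if i == 0 :> nat then odd_top mu j.+1 else odd_bottom mu j.+1).
    have [hj | hj] := boolP (0 < j.+1 < n).
      by have := W j.+1 hj; rewrite valid_at_flip ?V // eqxx implyTb => /andP[].
    by rewrite odd_top_out ?odd_bottom_out ?if_same.
  by move: left_ok right_ok; case: ifP => _ -> ->.
- rewrite valid_at_flip ?V //.
  case: (k =P j) => [-> | _].
    by rewrite (ltn_eqF (ltnSn j)) andbT; case: ifP C => _ /andP[].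
  case: (k =P j.+1) => [-> | _] //=.
  by case: ifP C => _ /andP[].
Qed.

Lemma flip_inj mu : 1 < n -> injective (flip mu).
Proof.
move=> n_gt1 a b eq_flip; apply: face_borders_inj => // c hc.
have := congr1 (fun nu : MVassign n => nu (Ordinal hc)) eq_flip; rewrite !ffunE /=.
by case: (face_borders a c); case: (face_borders b c); case: (mu _).
Qed.

End Flips.

(* The number of flippable faces among alpha_(1,j+1), alpha_(2,j+1), which lie
   between x_j and x_(j+1), when T and B mark the vertices with odd top and odd
   bottom crease. *)
Definition column_flips (T B : nat -> bool) j : nat :=
  (~~ B j && ~~ T j.+1) + (~~ T j && ~~ B j.+1).

Lemma ofg_degree_card_flippable n (mu : MVassign n) : 1 < n ->
  ofg_degree mu = #|[set a : face n | flippable mu a]|.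
Proof.
move=> n_gt1; rewrite /ofg_degree -(card_imset _ (flip_inj (mu := mu) n_gt1)).
apply: eq_card => nu; rewrite !inE; apply/andP/imsetP.
- by case=> _ /existsP[a /andP[fa /eqP ->]]; exists a; rewrite ?inE.
- case=> a; rewrite inE => fa ->; split; first by case/andP: fa.
  by apply/existsP; exists a; rewrite fa eqxx.
Qed.

Lemma ofg_degree_columns n (mu : MVassign n) : 1 < n -> locally_valid mu ->
  ofg_degree mu = \sum_(j < n) column_flips (odd_top mu) (odd_bottom mu) j.
Proof.
move=> n_gt1 valid; rewrite ofg_degree_card_flippable // -sum1_card big_mkcond /=.
rewrite (eq_bigr (fun a : face n => nat_of_bool (flippable mu (a.1, a.2)))); last first.
  by case=> i j _; rewrite inE; case: flippable.
rewrite -(pair_big xpredT xpredT (fun i j => nat_of_bool (flippable mu (i, j)))) /=.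
rewrite big_ord_recl big_ord1 -big_split /=; apply: eq_bigr => j _.
by rewrite /flippable valid !locally_valid_flip //= /column_flips addnC.
Qed.

Definition vertex_labelling (n : nat) (T B : nat -> bool) :=
  forall k, T k || B k -> (0 < k < n) && ~~ (T k && B k).

Lemma vertex_labelling_odd n (mu : MVassign n) :
  locally_valid mu -> vertex_labelling n (odd_top mu) (odd_bottom mu).
Proof.
move=> /locally_validP V k; rewrite /odd_top /odd_bottom.
case hk: (0 < k < n) => //= _; have := V k hk; rewrite /valid_at /=.
by case: (mv mu _); case: (mv mu _); case: (mv mu _); case: (mv mu _).
Qed.

Section ColumnSums.
Variables (n : nat) (T B : nat -> bool).
Local Notation f := (column_flips T B).

Lemma column_flips_le2 j : f j <= 2.
Proof. by rewrite /column_flips; case: (T j); case: (B j); case: (T j.+1); case: (B j.+1). Qed.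

Lemma column_flips_le1 j : T j || B j || T j.+1 || B j.+1 -> f j <= 1.
Proof. by rewrite /column_flips; case: (T j); case: (B j); case: (T j.+1); case: (B j.+1). Qed.

Lemma column_flips_gt0 j :
  (~~ T j && ~~ B j) || (~~ T j.+1 && ~~ B j.+1) ->
  ~~ (T j && B j) -> ~~ (T j.+1 && B j.+1) -> 0 < f j.
Proof. by rewrite /column_flips; case: (T j); case: (B j); case: (T j.+1); case: (B j.+1). Qed.

Lemma sum_column_flips_unlabelled :
  (forall k, ~~ T k && ~~ B k) -> \sum_(j < n) f j = 2 * n.
Proof.
move=> none; rewrite (eq_bigr (fun=> 2)) ?sum_nat_const ?card_ord 1?mulnC // => j _.
by rewrite /column_flips; case/andP: (none j) => -> ->; case/andP: (none j.+1) => -> ->.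
Qed.

Hypothesis lab : vertex_labelling n T B.

Lemma unlabelled_out k : ~~ (0 < k < n) -> ~~ T k && ~~ B k.
Proof. by move=> out; rewrite -negb_or; apply: contra out => /lab /andP[]. Qed.

Lemma labelled_once k : ~~ (T k && B k).
Proof. by case: (boolP (T k || B k)) => [/lab /andP[] | ] //; case: (T k); case: (B k). Qed.

Lemma sum_column_flips_ge2 : 1 < n -> 2 <= \sum_(j < n) f j.
Proof.
move=> n_gt1; have n_gt0 : 0 < n by lia.
have last_lt : n.-1 < n by lia.
have f_first : 0 < f 0.
  apply: column_flips_gt0 (labelled_once _) (labelled_once _).
  by apply/orP; left; apply: unlabelled_out.
have f_last : 0 < f n.-1.
  apply: column_flips_gt0 (labelled_once _) (labelled_once _).
  by apply/orP; right; apply: unlabelled_out; rewrite prednK // ltnn andbF.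
rewrite (bigD1 (Ordinal n_gt0)) // (bigD1 (Ordinal last_lt)) /=; first lia.
by rewrite -val_eqE /=; lia.
Qed.

Lemma sum_column_flips_le v : T v || B v -> \sum_(j < n) f j <= 2 * n - 2.
Proof.
move=> hv; have /andP[/andP[v_gt0 v_lt_n] _] := lab hv.
have prev_lt_n : v.-1 < n by lia.
have total : \sum_(j < n) f j + \sum_(j < n) (2 - f j) = 2 * n.
  rewrite -big_split /= (eq_bigr (fun=> 2)) => [|j _]; last by rewrite subnKC ?column_flips_le2.
  by rewrite sum_nat_const card_ord mulnC.
have f_prev : f v.-1 <= 1 by apply: column_flips_le1; rewrite prednK // -orbA hv orbT.
have f_v : f v <= 1 by apply: column_flips_le1; rewrite hv.
have gap : 2 <= \sum_(j < n) (2 - f j).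
  rewrite (bigD1 (Ordinal prev_lt_n)) // (bigD1 (Ordinal v_lt_n)) /=; first lia.
  by rewrite -val_eqE /=; lia.
lia.
Qed.

Lemma sum_column_flips_range : 1 < n ->
  let s := \sum_(j < n) f j in (2 <= s <= 2 * n - 2) \/ s = 2 * n.
Proof.
move=> n_gt1 /=; case: (boolP [exists k : 'I_n, T k || B k]) => [/existsP[k hk] | none].
  by left; rewrite sum_column_flips_ge2 // (sum_column_flips_le hk).
right; apply: sum_column_flips_unlabelled => k.
have [k_lt_n | k_ge_n] := ltnP k n; last by rewrite unlabelled_out // (leq_gtF k_ge_n) andbF.
by rewrite -negb_or; apply: contra none => hk; apply/existsP; exists (Ordinal k_lt_n).
Qed.

End ColumnSums.

Section Realization.
Variables (n : nat) (T B : nat -> bool).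
Hypothesis lab : vertex_labelling n T B.

(* Crease e_(3q) is a spine crease, e_(3q+1) the bottom crease of x_q and
   e_(3q+2) the top crease of x_(q+1).  The value on e_(3k) changes across x_k
   exactly when the odd crease of x_k is the right one. *)
Fixpoint spine k := if k is k'.+1 then spine k' (+) (~~ T k && ~~ B k) else false.

Definition realization_crease c :=
  let q := c %/ 3 in
  match c %% 3 with 0 => spine q | 1 => spine q.-1 (+) B q | _ => spine q (+) T q.+1 end.

Definition realization : MVassign n := [ffun c => realization_crease (val c)].

Lemma realization_vertex k : 0 < k < n ->
  [/\ mv realization (3 * k - 3) = spine k.-1,
      mv realization (3 * k - 1) = spine k.-1 (+) T k,
      mv realization (3 * k) = spine k.-1 (+) (~~ T k && ~~ B k) &
      mv realization (3 * k + 1) = spine k.-1 (+) B k].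
Proof.
move=> /andP[k_gt0 k_lt_n]; rewrite /realization !mv_ffun; try lia.
have -> : 3 * k - 3 = k.-1 * 3 + 0 by lia.
have -> : 3 * k - 1 = k.-1 * 3 + 2 by lia.
have -> : 3 * k + 1 = k * 3 + 1 by lia.
have -> : 3 * k = k * 3 + 0 by lia.
rewrite /realization_crease !divnMDl // !modnMDl !addn0 /= prednK //.
by case: k k_gt0 {k_lt_n}.
Qed.

Lemma realization_valid : locally_valid realization.
Proof.
apply/locally_validP => k hk; rewrite /valid_at /=.
have [-> -> -> ->] := realization_vertex hk.
by move: (labelled_once lab k); case: (T k); case: (B k); case: spine.
Qed.

Lemma odd_top_realization : odd_top realization =1 T.
Proof.
move=> k; rewrite /odd_top; have [hk | out] := boolP (0 < k < n).
  by have [-> -> _ _] := realization_vertex hk; case: (T k); case: spine.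
by case/andP: (unlabelled_out lab out) => /negbTE ->.
Qed.

Lemma odd_bottom_realization : odd_bottom realization =1 B.
Proof.
move=> k; rewrite /odd_bottom; have [hk | out] := boolP (0 < k < n).
  by have [-> _ _ ->] := realization_vertex hk; case: (B k); case: spine.
by case/andP: (unlabelled_out lab out) => _ /negbTE ->.
Qed.

End Realization.

Lemma realizable_degree n (T B : nat -> bool) : 1 < n -> vertex_labelling n T B ->
  exists2 mu : MVassign n,
    locally_valid mu & ofg_degree mu = \sum_(j < n) column_flips T B j.
Proof.
move=> n_gt1 lab; have valid := realization_valid lab.
exists (realization n T B) => //; rewrite ofg_degree_columns //.
apply: eq_bigr => j _.
by rewrite /column_flips !(odd_top_realization lab) !(odd_bottom_realization lab).
Qed.

Lemma sum_nat_const_on (F : nat -> nat) a b c :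
  (forall i, a <= i < b -> F i = c) -> \sum_(a <= i < b) F i = (b - a) * c.
Proof. by move=> Fc; rewrite (eq_big_nat _ _ Fc) sum_nat_const_nat. Qed.

Section TailLabelling.
Variables (n m r : nat).
Let T k := m < k < m + r.
Let B k := m + r <= k < n.

Lemma tail_labelling : 0 < r -> m + r < n -> vertex_labelling n T B.
Proof. by move=> r_gt0 mr_lt_n k; rewrite /T /B; lia. Qed.

Lemma sum_column_flips_tail : 0 < r -> r <= 2 -> m + r < n ->
  \sum_(j < n) column_flips T B j = 2 * m + r + 1.
Proof.
move=> r_gt0 r_le2 mr_lt_n.
rewrite -(big_mkord xpredT) (big_cat_nat (n := m)) //=; last lia.
rewrite (big_cat_nat (m := m) (n := m + r)) /=; [|lia|lia].
rewrite (big_cat_nat (m := m + r) (n := n.-1)) /=; [|lia|lia].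
rewrite (sum_nat_const_on (c := 2)) => [|j hj]; last by rewrite /column_flips /T /B; lia.
rewrite (sum_nat_const_on (c := 1)) => [|j hj]; last by rewrite /column_flips /T /B; lia.
rewrite (sum_nat_const_on (c := 0)) => [|j hj]; last by rewrite /column_flips /T /B; lia.
rewrite (sum_nat_const_on (c := 1)) => [|j hj]; last by rewrite /column_flips /T /B; lia.
lia.
Qed.

End TailLabelling.

Theorem theorem4p9 (n : nat) (hn : 2 <= n) (d : nat) :
  (exists mu : MVassign n, locally_valid mu /\ ofg_degree mu = d) <->
  ((2 <= d <= 2 * n - 2) \/ d = 2 * n).
Proof.
split=> [[mu [valid <-]] | [/andP[d_ge2 d_le] | ->]].
- by rewrite ofg_degree_columns //; apply: sum_column_flips_range (vertex_labelling_odd valid) hn.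
- pose m := (d - 2) %/ 2; pose r := (d - 2) %% 2 + 1.
  have r_gt0 : 0 < r by lia.
  have r_le2 : r <= 2 by lia.
  have mr_lt_n : m + r < n by lia.
  have [mu valid deg] := realizable_degree hn (tail_labelling r_gt0 mr_lt_n).
  by exists mu; split => //; rewrite deg sum_column_flips_tail //; lia.
- have no_labels : vertex_labelling n (fun=> false) (fun=> false) by [].
  have [mu valid deg] := realizable_degree hn no_labels.
  by exists mu; split => //; rewrite deg sum_column_flips_unlabelled.
Qed.
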